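(* Let $L$ be a finite dimensional simple Lie algebra over $\mathbb{C}$ with Cartan subalgebra $\eta$. Let $f:L\times L\to L$ be a biderivation of $L$ and let $\phi,\psi:L\to L$ be linear maps such that $f(x,y)=[\phi(x),y]=[x,\psi(y)]$ for all $x,y\in L$. Then $\phi(h)\in\eta$ and $\psi(h)\in\eta$ for every $h\in\eta$.
   Context: A biderivation of a Lie algebra $L$ is a bilinear map $f:L\times L\to L$ such that $f([x,y],z)=[x,f(y,z)]+[f(x,z),y]$ and $f(x,[y,z])=[f(x,y),z]+[y,f(x,z)]$ for all $x,y,z\in L$. *)

From mathcomp Require Import all_boot all_algebra.
From mathcomp Require Import Rstruct complex.
Set Implicit Arguments. Unset Strict Implicit. Unset Printing Implicit Defensive.
Import GRing.Theory.
Local Open Scope ring_scope.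

Definition Cfield : fieldType := (Rdefinitions.R)[i].

Section Lie.
Variables (F : fieldType) (V : vectType F) (br : V -> V -> V).

Definition is_linear_map (g : V -> V) : Prop :=
  forall (a : F) (x y : V), g (a *: x + y) = a *: g x + g y.

Definition is_bilinear (g : V -> V -> V) : Prop :=
  (forall (a : F) (x y z : V), g (a *: x + y) z = a *: g x z + g y z) /\
  (forall (a : F) (x y z : V), g x (a *: y + z) = a *: g x y + g x z).

Definition is_lie_bracket : Prop :=
  [/\ is_bilinear br,
      (forall x, br x x = 0) &
      (forall x y z, br x (br y z) + br y (br z x) + br z (br x y) = 0)].

Definition lie_subalgebra (H : {vspace V}) : Prop :=
  forall x y, x \in H -> y \in H -> br x y \in H.

Definition lie_ideal (I : {vspace V}) : Prop :=
  forall x y, y \in I -> br x y \in I.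

Definition simple_lie : Prop :=
  (exists x y, br x y != 0) /\
  (forall I : {vspace V}, lie_ideal I -> I = 0%VS \/ I = fullv).

(* Nilpotent subalgebra: some term C^n H of the lower central series vanishes,
   i.e. all iterated brackets [x1,[x2,...,[xn,y]...]] with xi, y in H are 0. *)
Definition lie_nilpotent (H : {vspace V}) : Prop :=
  exists n : nat, forall (s : seq V) (y : V),
    size s = n -> all (fun x => x \in H) s -> y \in H ->
    foldr br y s = 0.

Definition cartan_subalgebra (H : {vspace V}) : Prop :=
  [/\ lie_subalgebra H, lie_nilpotent H &
      (forall x, (forall h, h \in H -> br x h \in H) -> x \in H)].

Definition biderivation (f : V -> V -> V) : Prop :=
  [/\ is_bilinear f,
      (forall x y z, f (br x y) z = br x (f y z) + br (f x z) y) &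
      (forall x y z, f x (br y z) = br (f x y) z + br y (f x z))].

End Lie.

From HB Require Import structures.
From mathcomp Require Import all_boot all_algebra.
From mathcomp Require Import Rstruct complex zify.
From Stdlib Require Import Classical.
Set Implicit Arguments. Unset Strict Implicit. Unset Printing Implicit Defensive.
Import GRing.Theory Num.Theory passmx.
Local Open Scope ring_scope.

(* Write [[x, y]] for [br x y].  Because [[phi x, y] = [x, psi y]], the map
   [phi - psi] is skew for the bracket ([[a x, y] = - [x, a y]]), and then
   [phi = psi] is a quasi-centroid map ([[T x, y] = [x, T y]]).  On a simple
   Lie algebra over an algebraically closed field of characteristic not 2,
   quasi-centroid maps are scalars and skew maps vanish, so [phi = psi] is a
   scalar and preserves every subspace.
   A quasi-centroid map [T] commutes with every [ad a]: the defect
   [[T, ad a]] is both quasi-centroid and skew, hence central, hence zero.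
   So the eigenspace of an eigenvalue of [T] is a nonzero ideal.  For a skew
   map [a], [a^2] is quasi-centroid, hence a scalar [d]; if [d != 0] the
   eigenspaces of [a] for the two square roots of [d] are abelian and span the
   algebra, which would make it metabelian.  Hence skew maps square to zero,
   anticommute, and any product of three of them vanishes; the common kernel
   of all skew maps is then a nonzero ideal, i.e. everything. *)

Section LinearMap.
Variables (F : fieldType) (V : vectType F).

Section OneMap.
Variable T : V -> V.
Hypothesis T_linear : is_linear_map T.

Let Tl : {linear V -> V} := HB.pack T (GRing.isLinear.Build _ _ _ _ T T_linear).

Lemma lin0 : T 0 = 0. Proof. exact: linear0 Tl. Qed.
Lemma linD x y : T (x + y) = T x + T y. Proof. exact: (linearD Tl x y). Qed.
Lemma linZ a x : T (a *: x) = a *: T x. Proof. exact: (linearZZ Tl a x). Qed.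
Lemma linN x : T (- x) = - T x. Proof. exact: (linearN Tl x). Qed.
Lemma linB x y : T (x - y) = T x - T y. Proof. exact: (linearB Tl x y). Qed.

Lemma linear_eigenvector :
  GRing.closed_field_axiom F -> (0 < \dim {:V})%N ->
  exists a v, v != 0 /\ T v = a *: v.
Proof.
move=> F_closed dimV_gt0; pose g : 'End(V) := linfun Tl.
pose e := vbasis {:V}.
have /(PreClosedField.closed_rootP F_closed) [a] :
    size (char_poly (mxof e e g)) != 1%N.
  by rewrite size_char_poly; case: (\dim _) dimV_gt0.
rewrite -eigenvalue_root_char /eigenvalue -(vsof_eq0 (vbasisP _)).
rewrite -(leigenspaceE (vbasisP _)) -vpick0; set v := vpick _ => v_neq0.
exists a, v; split => //; have := memv_pick (leigenspace g a).
by rewrite memv_ker !lfun_simp /= subr_eq0 => /eqP.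
Qed.

End OneMap.

Lemma linear_comp (S T : V -> V) :
  is_linear_map S -> is_linear_map T -> is_linear_map (fun x => S (T x)).
Proof. by move=> S_lin T_lin a x y; rewrite T_lin S_lin. Qed.

Lemma linear_add (S T : V -> V) :
  is_linear_map S -> is_linear_map T -> is_linear_map (fun x => S x + T x).
Proof.
by move=> S_lin T_lin a x y; rewrite S_lin T_lin scalerDr addrACA.
Qed.

Lemma linear_sub (S T : V -> V) :
  is_linear_map S -> is_linear_map T -> is_linear_map (fun x => S x - T x).
Proof.
by move=> S_lin T_lin a x y; rewrite S_lin T_lin scalerBr opprD addrACA.
Qed.

Lemma vspace_of_closed_pred (P : V -> Prop) :
  P 0 -> (forall a x y, P x -> P y -> P (a *: x + y)) ->
  exists U : {vspace V}, forall x, x \in U <-> P x.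
Proof.
move=> P0 P_lin.
have PD x y : P x -> P y -> P (x + y).
  by move=> Px Py; have := P_lin 1 x y Px Py; rewrite scale1r.
have PZ a x : P x -> P (a *: x).
  by move=> Px; have := P_lin a x 0 Px P0; rewrite addr0.
suff grow n (U : {vspace V}) : (\dim {:V} - \dim U < n)%N ->
    (forall x, x \in U -> P x) -> exists U : {vspace V}, forall x, x \in U <-> P x.
  apply: (grow _ 0%VS); first exact: ltnSn.
  by move=> x; rewrite memv0 => /eqP ->.
elim: n U => // n IHn U dimU UP.
case: (classic (exists2 x, P x & x \notin U)) => [[x Px xNU] | UP'].
  apply: (IHn (U + <[x]>)%VS).
    have: (\dim U < \dim (U + <[x]>))%N.
      rewrite (ltn_leqif (dimv_leqif_eq (addvSl U _))).
      by apply: contraNneq xNU => ->; apply: (subvP (addvSr U _)); apply: memv_line.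
    by have := dimvS (subvf (U + <[x]>)); lia.
  move=> _ /memv_addP [u /UP Pu [_ /vlineP [a ->] ->]].
  by rewrite addrC; apply: PD => //; apply: PZ.
exists U => x; split; first exact: UP.
by move=> Px; apply: NNPP => xNU; apply: UP'; exists x => //; apply/negP.
Qed.

End LinearMap.

Section LieAlgebra.
Variables (F : fieldType) (V : vectType F) (br : V -> V -> V).
Hypothesis br_lie : is_lie_bracket br.

Lemma linear_brr x : is_linear_map (br x).
Proof. by case: br_lie => -[_ brlin] _ _ a y z; apply: brlin. Qed.

Lemma linear_brl z : is_linear_map (br^~ z).
Proof. by case: br_lie => -[brlin _] _ _ a x y; apply: brlin. Qed.

Lemma br0l z : br 0 z = 0. Proof. exact: lin0 (linear_brl z). Qed.
Lemma br0r x : br x 0 = 0. Proof. exact: lin0 (linear_brr x). Qed.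
Lemma brDl x y z : br (x + y) z = br x z + br y z.
Proof. exact: (linD (linear_brl z) x y). Qed.
Lemma brDr x y z : br x (y + z) = br x y + br x z.
Proof. exact: (linD (linear_brr x) y z). Qed.
Lemma brZl a x z : br (a *: x) z = a *: br x z.
Proof. exact: (linZ (linear_brl z) a x). Qed.
Lemma brZr a x z : br x (a *: z) = a *: br x z.
Proof. exact: (linZ (linear_brr x) a z). Qed.
Lemma brNl x z : br (- x) z = - br x z. Proof. exact: (linN (linear_brl z) x). Qed.
Lemma brNr x z : br x (- z) = - br x z. Proof. exact: (linN (linear_brr x) z). Qed.
Lemma brBl x y z : br (x - y) z = br x z - br y z.
Proof. exact: (linB (linear_brl z) x y). Qed.
Lemma brBr x y z : br x (y - z) = br x y - br x z.
Proof. exact: (linB (linear_brr x) y z). Qed.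

Lemma brxx x : br x x = 0.
Proof. by case: br_lie. Qed.

Lemma br_anticomm x y : br x y = - br y x.
Proof.
apply/eqP; rewrite -addr_eq0; apply/eqP.
by have := brxx (x + y); rewrite brDl !brDr !brxx add0r addr0.
Qed.

Lemma br_jacobi x y z : br x (br y z) = br (br x y) z + br y (br x z).
Proof.
case: br_lie => _ _ /(_ x y z) /eqP; rewrite -addrA addr_eq0 => /eqP ->.
by rewrite (br_anticomm z) brNr (br_anticomm z) opprD !opprK addrC.
Qed.

Lemma br_jacobiB x y z : br (br x y) z = br x (br y z) - br y (br x z).
Proof. by rewrite br_jacobi addrK. Qed.

Definition quasi_centroid (T : V -> V) :=
  is_linear_map T /\ forall x y, br (T x) y = br x (T y).

Definition skew_quasi_centroid (a : V -> V) :=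
  is_linear_map a /\ forall x y, br (a x) y = - br x (a y).

Lemma abelian_sum_metabelian (A B : {vspace V}) :
    {in A &, forall p p', br p p' = 0} -> {in B &, forall q q', br q q' = 0} ->
    (A + B)%VS = fullv ->
  forall x y z w, br (br x y) (br z w) = 0.
Proof.
move=> A_ab B_ab AB.
have split_AB x : exists2 p, p \in A & exists2 q, q \in B & x = p + q.
  by apply/memv_addP; rewrite AB memvf.
have key p q p' q' : p \in A -> q \in B -> p' \in A -> q' \in B ->
    br (br p q) (br p' q') = 0.
  move=> Ap Bq Ap' Bq'.
  have [ua Aua [ub Bub Du]] := split_AB (br p q').
  have [va Ava [vb Bvb Dv]] := split_AB (br q p').
  have q_pq : br q (br p' q') = br va q'.
    by rewrite br_jacobi -/(br q p') Dv brDl (B_ab q q') ?(B_ab vb q') ?br0r ?addr0.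
  have p_pq : br p (br p' q') = br p' ub.
    by rewrite br_jacobi (A_ab p p') // br0l add0r Du brDr (A_ab p' ua) ?add0r.
  rewrite br_jacobiB q_pq p_pq (br_jacobi p va q') (br_jacobi q p' ub) Du Dv.
  rewrite (A_ab p va) // (B_ab q ub) // br0l br0r add0r addr0 !(brDl, brDr).
  by rewrite (A_ab va ua) // (B_ab vb ub) // add0r addr0 subrr.
have br_AB x y : exists p, exists q, exists p', exists q',
    [/\ p \in A, q \in B, p' \in A, q' \in B & br x y = br p q - br p' q'].
  have [xa Axa [xb Bxb ->]] := split_AB x; have [ya Aya [yb Byb ->]] := split_AB y.
  exists xa, yb, ya, xb; split => //.
  rewrite !(brDl, brDr) (A_ab xa ya) ?(B_ab xb yb) // add0r addr0.
  by rewrite (br_anticomm xb).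
move=> x y z w.
have [p [q [p' [q' [Ap Bq Ap' Bq' ->]]]]] := br_AB x y.
have [r [s [r' [s' [Ar Bs Ar' Bs' ->]]]]] := br_AB z w.
by rewrite !(brBl, brBr) !key ?subrr.
Qed.

Section SimpleLieAlgebra.
Hypothesis br_simple : simple_lie br.

Lemma simple_ideal_cases (P : V -> Prop) :
    P 0 -> (forall a x y, P x -> P y -> P (a *: x + y)) ->
    (forall x y, P y -> P (br x y)) ->
  (forall x, P x -> x = 0) \/ (forall x, P x).
Proof.
move=> P0 P_lin P_br; have [U memU] := vspace_of_closed_pred P0 P_lin.
have U_ideal : lie_ideal br U by move=> x y /memU Py; apply/memU/P_br.
case: br_simple => _ /(_ U U_ideal) [U0 | Ufull]; [left | right] => x.
  by move/memU; rewrite U0 memv0 => /eqP.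
by apply/memU; rewrite Ufull memvf.
Qed.

Lemma center_eq0 z : (forall y, br z y = 0) -> z = 0.
Proof.
have [] := @simple_ideal_cases (fun z => forall y, br z y = 0).
- by move=> y; rewrite br0l.
- by move=> a x y x0 y0 w; rewrite brDl brZl x0 y0 scaler0 addr0.
- by move=> x y y0 w; rewrite br_jacobiB !y0 br0r subrr.
- by move=> center0; apply: center0.
case: br_simple => -[x [y xy_neq0]] _ center_full.
by rewrite center_full eqxx in xy_neq0.
Qed.

Lemma derived_centralizer_eq0 z : (forall u v, br z (br u v) = 0) -> z = 0.
Proof.
have [] := @simple_ideal_cases (fun z => forall u v, br z (br u v) = 0).
- by move=> u v; rewrite br0l.
- by move=> a x y x0 y0 u v; rewrite brDl brZl x0 y0 scaler0 addr0.
- move=> x y y0 u v.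
  by rewrite br_jacobiB y0 br0r (br_jacobi x u v) brDr !y0 addr0 subrr.
- by move=> centralizer0; apply: centralizer0.
case: br_simple => -[x [y xy_neq0]] _ centralizer_full.
suff xy0 : br x y = 0 by rewrite xy0 eqxx in xy_neq0.
by apply: center_eq0 => w; rewrite br_anticomm centralizer_full oppr0.
Qed.

Lemma simple_not_metabelian : ~ (forall x y z w, br (br x y) (br z w) = 0).
Proof.
move=> metab; case: br_simple => -[x [y xy_neq0]] _.
by rewrite (derived_centralizer_eq0 (metab x y)) eqxx in xy_neq0.
Qed.

Lemma simple_dimv_gt0 : (0 < \dim {:V})%N.
Proof.
case: br_simple => -[x [y xy_neq0]] _.
rewrite lt0n dimv_eq0; apply: contra_neq xy_neq0 => V0.
by have := memvf x; rewrite V0 memv0 => /eqP ->; rewrite br0l.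
Qed.

Hypothesis two_neq0 : (2 : F) != 0.
Hypothesis F_closed : GRing.closed_field_axiom F.

Lemma opp_self_eq0 (x : V) : x = - x -> x = 0.
Proof.
move=> xN; apply/eqP; suff : 2 *: x == 0 by rewrite scaler_eq0 (negPf two_neq0).
by rewrite scaler_nat mulr2n {2}xN subrr.
Qed.

Section QuasiCentroid.
Variable T : V -> V.
Hypothesis T_qc : quasi_centroid T.

Let T_sym : forall x y, br (T x) y = br x (T y) := T_qc.2.

Lemma qc_br_expand x u w :
  br (T (br x u)) w = br x (br (T u) w) + br (br (T x) w) u.
Proof. by rewrite T_sym br_jacobiB -!T_sym (br_anticomm u (br _ w)) opprK. Qed.

Local Notation P p q r s := (br (br (T p) q) (br r s)).

Lemma qc_four_term x u y v :
  P u y x v - P u v x y - P x y u v + P x v u y = 0.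
Proof.
(* Expand [[T [x, u], [y, v]]] with the Jacobi identity in two orders. *)
set a := br (T u) y; set b := br (T x) y; set c := br (T u) v; set d := br (T x) v.
have expand1 : br (T (br x u)) (br y v) =
    br x (br a v) + br x (br y c) + br (br b v) u + br (br y d) u.
  by rewrite qc_br_expand (br_jacobi (T u)) (br_jacobi (T x)) brDr brDl !addrA.
have expand2 : br (T (br x u)) (br y v) =
    br (br x a) v + br y (br x c) + br (br b u) v + br y (br d u).
  rewrite br_jacobi (qc_br_expand x u y) (qc_br_expand x u v) brDl brDr !addrA.
  by rewrite (addrAC (br (br x a) v)).
have : (br x (br a v) - br (br x a) v) + (br x (br y c) - br y (br x c))
     + (br (br b v) u - br (br b u) v) + (br (br y d) u - br y (br d u)) = 0.
  rewrite (addrACA (br x (br a v))) -opprD.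
  rewrite (addrACA (br x (br a v) + br x (br y c))) -opprD.
  by rewrite (addrACA (br x (br a v) + br x (br y c) + br (br b v) u)) -opprD
    -expand1 expand2 subrr.
rewrite (br_jacobi x a v) (addrC (br (br x a) v)) addrK.
rewrite (br_jacobi x y c) addrK.
rewrite (br_jacobiB b v u) (br_anticomm v (br b u)) opprK addrK.
rewrite (br_jacobiB y d u) (addrC (br y (br d u))) addrK => <-.
by rewrite (br_anticomm c) (br_anticomm v u) (br_anticomm y u) !brNr !opprK.
Qed.

Lemma qc_swap x y u v : P x y u v = - P u v x y.
Proof.
pose G p q r s := P p q r s + P r s p q.
have G13 p q r s : G p q r s = G r q p s.
  move: (qc_four_term r p q s); rewrite /G addrAC => /eqP.
  by rewrite subr_eq0 addrAC subr_eq => /eqP.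
have G12 p q r s : G q p r s = - G p q r s.
  by rewrite /G T_sym (br_anticomm q (T p)) (br_anticomm q p) brNl brNr opprD.
have G_eq0 : G x y u v = 0.
  apply: opp_self_eq0; rewrite {1}(G13 x y u v) (G12 y u x v) (G13 y u x v).
  by rewrite -(G12 x u y v) (G13 u x y v) (G12 x y u v).
by apply/eqP; rewrite -addr_eq0 -/(G x y u v) G_eq0.
Qed.

Lemma qc_br_leibniz a b c :
  br (T (br a b)) c = br (T a) (br b c) - br (T b) (br a c).
Proof.
apply/eqP; rewrite -subr_eq0; apply/eqP/derived_centralizer_eq0 => u v.
rewrite !brBl (qc_swap (br a b)) (qc_swap a) (qc_swap b) (br_jacobi a b c) brDr.
by rewrite opprK opprD opprK addrK addNr.
Qed.

(* [D a] is the commutator [[T, ad a]]. *)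
Local Notation D a b := (T (br a b) - br (T a) b).

Lemma qc_defect_sym a b c : br (D a b) c = br b (D a c).
Proof.
rewrite brBl brBr (T_sym (br a b)) (br_jacobiB a b (T c)) -(T_sym b) -(T_sym a).
rewrite (br_jacobi a (T b) c) -(T_sym a b) -(T_sym b (br a c)).
by rewrite addrAC (addrC (br (br (T a) b) c)) addrK.
Qed.

Lemma qc_defect_skew a b c : br (D a b) c = - br b (D a c).
Proof.
rewrite brBl brBr qc_br_leibniz (br_jacobiB (T a) b c) -T_sym.
by rewrite opprB addrC addrA subrK opprB.
Qed.

Lemma qc_centroid a b : T (br a b) = br (T a) b.
Proof.
apply/eqP; rewrite -subr_eq0; apply/eqP/center_eq0 => c.
by apply: opp_self_eq0; rewrite {1}qc_defect_sym qc_defect_skew opprK.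
Qed.

Lemma qc_scalar : exists c, forall x, T x = c *: x.
Proof.
have [c [v [v_neq0 Tv]]] := linear_eigenvector T_qc.1 F_closed simple_dimv_gt0.
have [] := @simple_ideal_cases (fun k => T k = c *: k).
- by rewrite (lin0 T_qc.1) scaler0.
- by move=> a x y Tx Ty; rewrite T_qc.1 Tx Ty scalerDr !scalerA mulrC.
- move=> x y Ty; rewrite br_anticomm (linN T_qc.1) qc_centroid Ty brZl.
  by rewrite -scalerN -br_anticomm.
- by move=> eigen0; rewrite (eigen0 v Tv) eqxx in v_neq0.
- by exists c.
Qed.

End QuasiCentroid.

Lemma sqc_eigen_abelian a l p q : skew_quasi_centroid a -> l != 0 ->
  a p = l *: p -> a q = l *: q -> br p q = 0.
Proof.
move=> [_ a_skew] l_neq0 ap aq; apply/eqP.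
suff : l *: br p q == 0 by rewrite scaler_eq0 (negPf l_neq0).
apply/eqP/opp_self_eq0.
by rewrite -{1}brZl -ap a_skew aq brZr.
Qed.

Lemma sqc_sqr a : skew_quasi_centroid a -> quasi_centroid (fun x => a (a x)).
Proof.
case=> a_lin a_skew; split; first exact: linear_comp.
by move=> x y; rewrite !a_skew opprK.
Qed.

Lemma sqc_sqr_eq0 a : skew_quasi_centroid a -> forall x, a (a x) = 0.
Proof.
move=> a_sqc x; have [a_lin _] := a_sqc.
have [d a2] := qc_scalar (sqc_sqr a_sqc).
have [d0 | d_neq0] := eqVneq d 0; first by rewrite a2 d0 scale0r.
exfalso; apply: simple_not_metabelian.
have /(PreClosedField.closed_rootP F_closed) [m] : size ('X^2 - d%:P) != 1%N.
  by rewrite size_XnsubC.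
rewrite rootE !hornerE subr_eq0 => /eqP m2.
have m_neq0 : m != 0.
  by apply: contra_neq d_neq0 => m0; rewrite -m2 m0 expr0n.
have eigen_vspace l : exists U : {vspace V}, forall x, x \in U <-> a x = l *: x.
  apply: vspace_of_closed_pred; first by rewrite (lin0 a_lin) scaler0.
  by move=> c y z ay az; rewrite a_lin ay az scalerDr !scalerA mulrC.
have [A memA] := eigen_vspace m; have [B memB] := eigen_vspace (- m).
apply: (abelian_sum_metabelian (A := A) (B := B)).
- by move=> p q /memA ap /memA aq; apply: sqc_eigen_abelian a_sqc m_neq0 ap aq.
- move=> p q /memB ap /memB aq.
  by apply: sqc_eigen_abelian a_sqc _ ap aq; rewrite oppr_eq0.
apply/vspaceP => y; rewrite memvf; apply/memv_addP.
have m2_neq0 : 2 * m != 0 by rewrite mulf_neq0.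
pose k := (2 * m)^-1.
exists (k *: (a y + m *: y)).
  apply/memA; rewrite (linZ a_lin) scalerA (mulrC m k) -scalerA; congr (_ *: _).
  by rewrite (linD a_lin) (linZ a_lin) a2 -m2 scalerDr scalerA addrC.
exists (k *: (m *: y - a y)).
  apply/memB; rewrite (linZ a_lin) scalerA (mulrC _ k) -scalerA; congr (_ *: _).
  rewrite (linB a_lin) (linZ a_lin) a2 -m2 scaleNr -scalerN opprB scalerBr.
  by rewrite scalerA.
rewrite -scalerDr addrC addrA subrK -scalerDl -mulr2n -mulr_natl scalerA.
by rewrite mulVf // scale1r.
Qed.
Lemma sqc_add a b : skew_quasi_centroid a -> skew_quasi_centroid b ->
  skew_quasi_centroid (fun x => a x + b x).
Proof.
case=> a_lin a_skew [b_lin b_skew]; split; first exact: linear_add.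
by move=> x y; rewrite brDl brDr a_skew b_skew opprD.
Qed.

Lemma sqc_anticomm a b : skew_quasi_centroid a -> skew_quasi_centroid b ->
  forall x, a (b x) = - b (a x).
Proof.
move=> a_sqc b_sqc x; apply/eqP; rewrite -addr_eq0.
have := sqc_sqr_eq0 (sqc_add a_sqc b_sqc) x.
rewrite (linD a_sqc.1) (linD b_sqc.1) !sqc_sqr_eq0 // add0r addr0 => ->.
by [].
Qed.

Lemma sqc_comp a b : skew_quasi_centroid a -> skew_quasi_centroid b ->
  skew_quasi_centroid (fun x => a (b x)).
Proof.
move=> a_sqc b_sqc; have [a_lin a_skew] := a_sqc; have [b_lin b_skew] := b_sqc.
split; first exact: linear_comp.
by move=> x y; rewrite a_skew b_skew opprK (sqc_anticomm b_sqc a_sqc) brNr.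
Qed.

Lemma sqc_comp3_eq0 a b c :
    skew_quasi_centroid a -> skew_quasi_centroid b -> skew_quasi_centroid c ->
  forall x, a (b (c x)) = 0.
Proof.
move=> a_sqc b_sqc c_sqc x; apply: opp_self_eq0.
rewrite {1}(sqc_anticomm a_sqc (sqc_comp b_sqc c_sqc)).
rewrite (sqc_anticomm a_sqc b_sqc) (sqc_anticomm a_sqc c_sqc).
by rewrite (linN b_sqc.1) opprK.
Qed.

Lemma sqc_ad_commutator a k : skew_quasi_centroid a ->
  skew_quasi_centroid (fun x => a (br k x) - br k (a x)).
Proof.
case=> a_lin a_skew; split.
  by apply: linear_sub; apply: linear_comp => //; apply: linear_brr.
move=> x y; rewrite brBl brBr a_skew (br_jacobiB k x (a y)).
rewrite (br_jacobiB k (a x) y) -[br x (a y)]opprK -[br x (a (br k y))]opprK.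
by rewrite -!a_skew !opprB !brNr !opprK addrACA subrr addr0.
Qed.

Lemma sqc_eq0 a : skew_quasi_centroid a -> forall x, a x = 0.
Proof.
move=> a_sqc.
have [] := @simple_ideal_cases
  (fun z => forall b, skew_quasi_centroid b -> b z = 0).
- by move=> b [b_lin _]; rewrite (lin0 b_lin).
- by move=> c x y x0 y0 b b_sqc; rewrite b_sqc.1 x0 // y0 // scaler0 addr0.
- move=> k y y0 b b_sqc; have /eqP := y0 _ (sqc_ad_commutator k b_sqc).
  by rewrite subr_eq0 => /eqP ->; rewrite y0 // br0r.
- move=> ideal0 x; apply: (ideal0) => b b_sqc; apply: ideal0 => c c_sqc.
  exact: sqc_comp3_eq0 c_sqc b_sqc a_sqc x.
- by move=> ideal_full x; apply: ideal_full.
Qed.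

End SimpleLieAlgebra.

End LieAlgebra.

Theorem lemma2p2 (V : vectType Cfield) (br : V -> V -> V)
  (Hlie : is_lie_bracket br) (Hsimple : simple_lie br)
  (eta : {vspace V}) (Heta : cartan_subalgebra br eta)
  (f : V -> V -> V) (Hf : biderivation br f)
  (phi psi : V -> V) (Hphi : is_linear_map phi) (Hpsi : is_linear_map psi)
  (Hfphi : forall x y, f x y = br (phi x) y)
  (Hfpsi : forall x y, f x y = br x (psi y)) :
  forall h, h \in eta -> phi h \in eta /\ psi h \in eta.
Proof.
have two_neq0 : (2 : Cfield) != 0 by rewrite pnatr_eq0.
have C_closed : GRing.closed_field_axiom Cfield.
  exact: (@solve_monicpoly Rdefinitions.R[i]).
have phi_psi x y : br (phi x) y = br x (psi y) by rewrite -Hfphi Hfpsi.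
have psi_phi x y : br (psi x) y = br x (phi y).
  by rewrite (br_anticomm Hlie) -phi_psi (br_anticomm Hlie (phi y)) opprK.
have phi_eq_psi x : phi x = psi x.
  apply/eqP; rewrite -subr_eq0; apply/eqP; move: x.
  apply: (sqc_eq0 Hlie Hsimple two_neq0 C_closed); split; first exact: linear_sub.
  by move=> x y; rewrite (brBl Hlie) (brBr Hlie) phi_psi psi_phi opprB.
have [c phi_c] : exists c, forall x, phi x = c *: x.
  apply: (qc_scalar Hlie Hsimple two_neq0 C_closed); split => // x y.
  by rewrite phi_psi phi_eq_psi.
by move=> h eta_h; rewrite -phi_eq_psi phi_c memvZ.
Qed.
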